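(* Let $\mathcal{A}$ be a weighted pushdown system. There exists an infinite path $\pi$ from the initial configuration with $\mathrm{LimInfAvg}(\pi)\geq 0$ if and only if for every $\epsilon>0$ there exists an infinite path $\pi_\epsilon$ from the initial configuration with $\mathrm{LimInfAvg}(\pi_\epsilon)>-\epsilon$.
   Context: A weighted pushdown system (WPS) is $\mathcal{A}=\langle Q,\Gamma,q_0,E,w\rangle$ with finite states $Q$, finite stack alphabet $\Gamma\ni\bot$ ($\bot$ never pushed or popped), edges $E\subseteq(Q\times\Gamma)\times(Q\times\mathrm{Com}(\Gamma))$ with $\mathrm{Com}(\Gamma)=\{\mathit{skip},\mathit{pop}\}\cup\{\mathit{push}(z)\}$, weights $w:E\to\mathbb{Z}$; initial configuration $(\bot,q_0)$; successor of $(\alpha,q)$ via edge $(q,\mathrm{Top}(\alpha),q',\mathit{com})$ is $(\mathit{com}(\alpha),q')$. For an infinite path $\pi$, $\mathrm{LimInfAvg}(\pi)=\liminf_i w(\pi[0,i])/i$ where $w(\pi[0,i])$ is the total weight of the first $i$ edges. *)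

From Stdlib Require Import Reals ZArith List FinFun.
Import ListNotations.
Open Scope R_scope.

Inductive com (G : Type) : Type :=
  | Skip : com G
  | Pop : com G
  | Push : G -> com G.
Arguments Skip {G}.
Arguments Pop {G}.
Arguments Push {G} _.

Definition edge (Q G : Type) : Type := ((Q * G) * (Q * com G))%type.
Definition e_src {Q G} (e : edge Q G) : Q := fst (fst e).
Definition e_top {Q G} (e : edge Q G) : G := snd (fst e).
Definition e_dst {Q G} (e : edge Q G) : Q := fst (snd e).
Definition e_com {Q G} (e : edge Q G) : com G := snd (snd e).

(* Configurations (alpha, q): stack as a list with its top at the head. *)
Definition config (Q G : Type) : Type := (list G * Q)%type.

(* Top of the stack (the default bot is never used on reachable stacks). *)
Definition Top {G} (bot : G) (alpha : list G) : G :=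
  match alpha with z :: _ => z | [] => bot end.

Definition apply_com {G} (c : com G) (alpha : list G) : list G :=
  match c with
  | Skip => alpha
  | Pop => tl alpha
  | Push z => z :: alpha
  end.

Definition wps_wf {Q G} (bot : G) (E : list (edge Q G)) : Prop :=
  forall e, In e E ->
    e_com e <> Push bot /\ (e_top e = bot -> e_com e <> Pop).

(* An infinite path from the initial configuration ([bot], q0), given as its
   sequence of edges; the configurations c i are the visited ones. *)
Definition is_path {Q G} (bot : G) (q0 : Q) (E : list (edge Q G))
  (p : nat -> edge Q G) : Prop :=
  exists c : nat -> config Q G,
    c 0%nat = ([bot], q0) /\
    forall i, In (p i) E /\
              e_src (p i) = snd (c i) /\
              e_top (p i) = Top bot (fst (c i)) /\
              c (S i) = (apply_com (e_com (p i)) (fst (c i)), e_dst (p i)).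

Fixpoint prefix_weight {Q G} (w : edge Q G -> Z) (p : nat -> edge Q G)
  (i : nat) : Z :=
  match i with
  | O => 0%Z
  | S k => (prefix_weight w p k + w (p k))%Z
  end.

Definition avg {Q G} (w : edge Q G -> Z) (p : nat -> edge Q G) (i : nat) : R :=
  IZR (prefix_weight w p i) / INR i.

Definition is_lower_bound (S : R -> Prop) (m : R) : Prop :=
  forall x, S x -> m <= x.
Definition is_glb (S : R -> Prop) (m : R) : Prop :=
  is_lower_bound S m /\ forall b, is_lower_bound S b -> b <= m.

Definition is_liminf (u : nat -> R) (l : R) : Prop :=
  exists t : nat -> R,
    (forall n, is_glb (fun x => exists k, (n <= k)%nat /\ x = u k) (t n)) /\
    is_lub (fun x => exists n, x = t n) l.

Definition is_LimInfAvg {Q G} (w : edge Q G -> Z) (p : nat -> edge Q G)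
  (l : R) : Prop :=
  is_liminf (avg w p) l.

From Stdlib Require Import Reals ZArith List FinFun Lia Lra Classical ClassicalEpsilon.
Import ListNotations.
Open Scope R_scope.

(* Call a position b of a path a floor if the stack
   never gets lower than at b afterwards; every path has infinitely many floors.  Take for
   each level m a path p_m with LimInfAvg > -1/(m+1).  Two pigeonhole arguments over the
   finitely many heads (state, top symbol) give a head hd that recurs at infinitely many
   floors of p_m for infinitely many m; from such a p_m and one of its hd-floors a we get a
   "source" of level j: after a, the weight never drops below slope -1/(j+1) by more than a
   constant.  From a floor on, a run only touches the stack above that floor, so a source can
   be spliced after any prefix ending at head hd.  Gluing, for j = 1, 2, ..., the segment of
   source j between its initial floor and a far enough hd-floor, the prefix weights stay
   above slope -c/(j+1) on the j-th block; hence the limit path has prefix weights eventually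
   above -eps k for every eps > 0, and its LimInfAvg is >= 0. *)
Lemma exists_min (P : nat -> Prop) :
  (exists n, P n) -> exists n, P n /\ forall m, P m -> (n <= m)%nat.
Proof.
  intros [n Hn]. revert Hn. induction n as [n IH] using (well_founded_induction lt_wf).
  intros Hn. destruct (classic (exists m, P m /\ (m < n)%nat)) as [[m [Hm Hlt]]|Hno].
  - exact (IH m Hlt Hm).
  - exists n. split; [exact Hn|]. intros m Hm. destruct (Nat.le_gt_cases n m); [assumption|].
    exfalso. apply Hno. eauto.
Qed.

Lemma pigeonhole {A : Type} (l : list A) (P : nat -> A -> Prop) :
  (forall M, exists n, (M <= n)%nat /\ exists x, In x l /\ P n x) ->
  exists x, In x l /\ forall M, exists n, (M <= n)%nat /\ P n x.
Proof.
  induction l as [|y l IH]; intros H.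
  - destruct (H 0%nat) as [n [_ [x [[] _]]]].
  - destruct (classic (forall M, exists n, (M <= n)%nat /\ P n y)) as [Hy|Hy].
    + exists y. split; [left; reflexivity|exact Hy].
    + apply not_all_ex_not in Hy. destruct Hy as [M0 HM0].
      destruct IH as [x [Hx Hx2]].
      * intros M. destruct (H (Nat.max M M0)) as [n [Hn [x [Hx HP]]]].
        exists n. split; [lia|]. exists x. split; [|exact HP].
        destruct Hx as [<-|Hx]; [|exact Hx].
        exfalso. apply HM0. exists n. split; [lia|exact HP].
      * exists x. split; [right; exact Hx|exact Hx2].
Qed.

Lemma dependent_choice_nat {A : Type} (I : nat -> A -> Prop) (T : nat -> A -> A -> Prop)
  (x0 : A) :
  I 0%nat x0 -> (forall j x, I j x -> exists y, I (S j) y /\ T j x y) ->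
  exists s : nat -> A, forall n, I n (s n) /\ T n (s n) (s (S n)).
Proof.
  intros H0 Hstep.
  assert (F : forall j x, {y | I j x -> I (S j) y /\ T j x y}).
  { intros j x. apply constructive_indefinite_description.
    destruct (classic (I j x)) as [Hx|Hx].
    - destruct (Hstep j x Hx) as [y Hy]. exists y. tauto.
    - exists x. tauto. }
  set (s := nat_rect (fun _ => A) x0 (fun j x => proj1_sig (F j x))).
  assert (HI : forall n, I n (s n)).
  { induction n as [|n IH]; [exact H0|]. exact (proj1 (proj2_sig (F n (s n)) IH)). }
  exists s. intros n. split; [apply HI|]. exact (proj2 (proj2_sig (F n (s n)) (HI n))).
Qed.

Lemma increasing_ge_id (f : nat -> nat) :
  (forall n, (f n < f (S n))%nat) -> forall n, (n <= f n)%nat.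
Proof. intros Hinc n. induction n; [lia|]. specialize (Hinc n). lia. Qed.

Lemma limit_of_prefixes {A : Type} (P : nat -> nat -> A) (len : nat -> nat) :
  (forall n, (len n < len (S n))%nat) ->
  (forall n i, (i < len n)%nat -> P (S n) i = P n i) ->
  forall n i, (i < len n)%nat -> P (S i) i = P n i.
Proof.
  intros Hinc Hagr.
  pose proof (increasing_ge_id len Hinc) as Hlen.
  assert (Hmono : forall n m, (n <= m)%nat -> (len n <= len m)%nat).
  { intros n m Hnm. induction Hnm; [lia|]. specialize (Hinc m). lia. }
  assert (Hlater : forall n m, (n <= m)%nat -> forall i, (i < len n)%nat -> P m i = P n i).
  { intros n m Hnm. induction Hnm as [|m Hnm IH]; intros i Hi; [reflexivity|].
    rewrite Hagr by (specialize (Hmono n m Hnm); lia). apply IH, Hi. }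
  intros n i Hi. destruct (Nat.le_gt_cases n (S i)) as [Hn|Hn].
  - apply Hlater; assumption.
  - symmetry. apply Hlater; [lia|]. specialize (Hlen (S i)). lia.
Qed.

Lemma Rabs_bounds (x B : R) : Rabs x <= B -> - B <= x <= B.
Proof. unfold Rabs; destruct (Rcase_abs x); lra. Qed.

(* The rate 1/(j+1), used as the admissible slope of weight loss at level j. *)
Definition rate (j : nat) : R := / (INR j + 1).

Lemma rate_pos (j : nat) : 0 < rate j.
Proof. unfold rate. apply Rinv_0_lt_compat. pose proof (pos_INR j). lra. Qed.

Lemma rate_antitone (i j : nat) : (i <= j)%nat -> rate j <= rate i.
Proof.
  intros Hij. unfold rate. apply Rinv_le_contravar; [pose proof (pos_INR i); lra|].
  apply le_INR in Hij. lra.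
Qed.

Lemma rate_small (eps : R) : eps > 0 -> exists j, rate j <= eps.
Proof.
  intros Heps. destruct (INR_unbounded (/ eps)) as [j Hj]. exists j. unfold rate.
  rewrite <- (Rinv_inv eps). apply Rinv_le_contravar; [apply Rinv_0_lt_compat; lra|lra].
Qed.

Lemma liminf_tail (u : nat -> R) (l eps : R) :
  is_liminf u l -> l > - eps -> exists n0, forall k, (n0 <= k)%nat -> u k > - eps.
Proof.
  intros [t [Ht [Hub Hlub]]] Hl.
  destruct (classic (exists n0, t n0 > - eps)) as [[n0 Hn0]|Hno].
  - exists n0. intros k Hk. destruct (Ht n0) as [Hlb _].
    assert (t n0 <= u k) by (apply Hlb; eauto). lra.
  - exfalso. assert (l <= - eps).
    { apply Hlub. intros x [n ->]. apply Rnot_gt_le. intros Hc. apply Hno. eauto. }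
    lra.
Qed.

Lemma glb_tail (u : nat -> R) (B : R) (n : nat) :
  (forall k, Rabs (u k) <= B) ->
  { m | is_glb (fun x => exists k, (n <= k)%nat /\ x = u k) m }.
Proof.
  intros HB.
  destruct (completeness (fun x => exists k, (n <= k)%nat /\ x = - u k)) as [m [Hm1 Hm2]].
  - exists B. intros x [k [_ ->]]. specialize (HB k). apply Rabs_bounds in HB. lra.
  - exists (- u n). exists n. split; auto.
  - exists (- m). split.
    + intros x [k [Hk ->]]. assert (- u k <= m) by (apply Hm1; eauto). lra.
    + intros b Hb. assert (m <= - b).
      { apply Hm2. intros x [k [Hk ->]]. assert (b <= u k) by (apply Hb; eauto). lra. }
      lra.
Qed.

Lemma liminf_nonneg (u : nat -> R) (B : R) :
  (forall k, Rabs (u k) <= B) ->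
  (forall eps, eps > 0 -> exists K, forall k, (K <= k)%nat -> u k >= - eps) ->
  exists l, is_liminf u l /\ l >= 0.
Proof.
  intros HB Hev.
  set (t := fun n => proj1_sig (glb_tail u B n HB)).
  assert (Ht : forall n, is_glb (fun x => exists k, (n <= k)%nat /\ x = u k) (t n))
    by (intros n; exact (proj2_sig (glb_tail u B n HB))).
  destruct (completeness (fun x => exists n, x = t n)) as [l Hl].
  - exists B. intros x [n ->]. destruct (Ht n) as [Hlb _].
    assert (t n <= u n) by (apply Hlb; eauto). pose proof (Rabs_bounds _ _ (HB n)). lra.
  - exists (t 0%nat). eauto.
  - exists l. split; [exists t; split; assumption|].
    apply Rnot_lt_ge. intros Hneg.
    destruct (Hev (- l / 2)) as [K HK]; [lra|].
    destruct (Ht K) as [_ Hg].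
    assert (- (- l / 2) <= t K).
    { apply Hg. intros x [k [Hk ->]]. specialize (HK k Hk). lra. }
    destruct Hl as [Hub _]. assert (t K <= l) by (apply Hub; eauto). lra.
Qed.

(* Bound inside a glued block: a prefix of weight X >= -R k e followed by a segment losing at
   most slope k' <= k plus a constant C <= k e stays above slope -(R+1) k. *)
Lemma block_inner_bound (R k k' e T X C D : R) :
  0 <= R -> 0 < k' <= k -> 0 <= e -> 0 <= T ->
  X >= - (R * k * e) -> C <= k * e -> D >= - (k' * T) - C ->
  X + D >= - ((R + 1) * k * (e + T)).
Proof.
  intros HR Hk He HT HX HC HD.
  assert (HkT : k' * T <= k * T) by (apply Rmult_le_compat_r; lra).
  assert (HRkT : 0 <= R * (k * T)) by (apply Rmult_le_pos; [lra|apply Rmult_le_pos; lra]).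
  replace ((R + 1) * k * (e + T)) with (R * k * e + k * e + k * T + R * (k * T)) by ring.
  lra.
Qed.

(* Bound at the end of a glued block: if the segment is long enough to absorb X, C and the
   next constant C', the new prefix satisfies the invariant at the finer rate k'. *)
Lemma block_end_bound (R k' e d X C C' D : R) :
  2 <= R -> 0 < k' -> 0 <= e -> Rabs X + Rabs C + Rabs C' <= k' * d ->
  D >= - (k' * d) - C ->
  X + D >= - (R * k' * (e + d)) /\ C' <= k' * (e + d).
Proof.
  intros HR Hk He Hd HD.
  pose proof (Rle_abs X) as HX. pose proof (Rle_abs (- X)) as HnX. rewrite Rabs_Ropp in HnX.
  pose proof (Rle_abs C) as HC. pose proof (Rle_abs C') as HC'.
  pose proof (Rabs_pos X). pose proof (Rabs_pos C). pose proof (Rabs_pos C').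
  assert (Hke : 0 <= k' * e) by (apply Rmult_le_pos; lra).
  assert (Hkd : 0 <= k' * d) by lra.
  assert (HRe : 0 <= R * (k' * e)) by (apply Rmult_le_pos; lra).
  assert (HRd : 2 * (k' * d) <= R * (k' * d)) by (apply Rmult_le_compat_r; lra).
  replace (R * k' * (e + d)) with (R * (k' * e) + R * (k' * d)) by ring.
  replace (k' * (e + d)) with (k' * e + k' * d) by ring.
  split; lra.
Qed.

Lemma eventual_slope (V : nat -> R) (len : nat -> nat) (c : R) :
  0 <= c -> (forall n, (len n < len (S n))%nat) ->
  (forall n k, (len n <= k <= len (S n))%nat -> V k >= - (c * rate n * INR k)) ->
  forall eps, eps > 0 -> exists K, forall k, (K <= k)%nat -> V k >= - (eps * INR k).
Proof.
  intros Hc Hinc Hblock eps Heps.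
  destruct (rate_small (eps / (c + 1))) as [j0 Hj0].
  { apply Rdiv_lt_0_compat; lra. }
  assert (Hblock_of : forall d k, (len j0 <= k <= len (j0 + d))%nat ->
            exists j, (j0 <= j)%nat /\ (len j <= k <= len (S j))%nat).
  { induction d as [|d IH]; intros k Hk.
    - exists j0. rewrite Nat.add_0_r in Hk. specialize (Hinc j0). split; lia.
    - destruct (Nat.le_gt_cases k (len (j0 + d)%nat)); [apply IH; lia|].
      exists (j0 + d)%nat. rewrite <- plus_n_Sm in Hk. split; lia. }
  pose proof (increasing_ge_id len Hinc) as Hlen.
  exists (len j0). intros k Hk.
  destruct (Hblock_of k k) as [j [Hj Hjk]]; [specialize (Hlen (j0 + k)%nat); lia|].
  specialize (Hblock j k Hjk).
  assert (Hrate : c * rate j <= eps).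
  { pose proof (rate_antitone j0 j Hj). pose proof (rate_pos j).
    assert (c * rate j <= (c + 1) * (eps / (c + 1))) by nra.
    replace ((c + 1) * (eps / (c + 1))) with eps in * by (field; lra). lra. }
  pose proof (pos_INR k). nra.
Qed.

Section System.

Context {Q G : Type} (bot : G) (q0 : Q) (Ed : list (edge Q G)) (w : edge Q G -> Z).

Fixpoint run (p : nat -> edge Q G) (i : nat) : config Q G :=
  match i with
  | O => ([bot], q0)
  | S k => (apply_com (e_com (p k)) (fst (run p k)), e_dst (p k))
  end.

Definition valid (p : nat -> edge Q G) : Prop :=
  forall i, In (p i) Ed /\ e_src (p i) = snd (run p i) /\
            e_top (p i) = Top bot (fst (run p i)).

Lemma is_path_valid (p : nat -> edge Q G) : is_path bot q0 Ed p <-> valid p.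
Proof.
  split.
  - intros [c [H0 H]].
    assert (Hc : forall i, c i = run p i).
    { induction i; simpl; [exact H0|].
      destruct (H i) as (_ & _ & _ & ->). rewrite IHi. reflexivity. }
    intros i. destruct (H i) as (A & B & C & _). rewrite <- Hc. auto.
  - intros H. exists (run p). split; [reflexivity|].
    intros i. destruct (H i) as (A & B & C). repeat split; auto.
Qed.

Lemma run_ext (p p' : nat -> edge Q G) (n : nat) :
  (forall i, (i < n)%nat -> p i = p' i) -> run p n = run p' n.
Proof.
  induction n; intros H; simpl; [reflexivity|].
  rewrite IHn by (intros; apply H; lia). rewrite H by lia. reflexivity.
Qed.

Lemma prefix_weight_ext (p p' : nat -> edge Q G) (n : nat) :
  (forall i, (i < n)%nat -> p i = p' i) -> prefix_weight w p n = prefix_weight w p' n.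
Proof.
  induction n; intros H; simpl; [reflexivity|].
  rewrite IHn by (intros; apply H; lia). rewrite H by lia. reflexivity.
Qed.

(* Along a run of a well-formed system the stack is a word without bot followed by bot;
   in particular it is never empty. *)
Lemma run_stack_nonempty (p : nat -> edge Q G) :
  wps_wf bot Ed -> valid p -> forall i, fst (run p i) <> [].
Proof.
  intros Hwf Hv.
  assert (Hshape : forall i, exists x, fst (run p i) = x ++ [bot] /\ ~ In bot x).
  { induction i as [|i [x [Hx Hn]]]; [exists []; simpl; auto|]. simpl.
    destruct (Hv i) as (Hin & _ & Ht). destruct (Hwf _ Hin) as [Hpush Hpop].
    rewrite Hx. destruct (e_com (p i)) eqn:Hc; cbn [apply_com].
    - exists x; auto.
    - destruct x as [|z x].
      + exfalso. apply Hpop; [rewrite Ht, Hx; reflexivity|reflexivity].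
      + exists x. simpl in Hn. auto.
    - exists (g :: x). split; [reflexivity|]. intros [Heq|Hin']; [|auto].
      apply Hpush. rewrite Heq. reflexivity. }
  intros i. destruct (Hshape i) as [x [Hx _]]. rewrite Hx. destruct x; discriminate.
Qed.

Definition head (p : nat -> edge Q G) (i : nat) : Q * G :=
  (snd (run p i), Top bot (fst (run p i))).

Definition floor_point (p : nat -> edge Q G) (b : nat) : Prop :=
  forall i, (b <= i)%nat -> (length (fst (run p b)) <= length (fst (run p i)))%nat.

(* Positions of minimal stack height beyond M are floors, so floors are unbounded. *)
Lemma floors_unbounded (p : nat -> edge Q G) (M : nat) :
  exists b, (M <= b)%nat /\ floor_point p b.
Proof.
  destruct (exists_min (fun h => exists i, (M <= i)%nat /\ length (fst (run p i)) = h))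
    as [h [[i [Hi Hh]] Hmin]]; [eauto|].
  exists i. split; [exact Hi|]. intros j Hj. rewrite Hh. apply Hmin. exists j. split; [lia|auto].
Qed.

Definition splice (P : nat -> edge Q G) (len : nat) (p : nat -> edge Q G) (a : nat) :
  nat -> edge Q G :=
  fun i => if Nat.ltb i len then P i else p (i - len + a)%nat.

Lemma splice_lt (P : nat -> edge Q G) (len : nat) (p : nat -> edge Q G) (a i : nat) :
  (i < len)%nat -> splice P len p a i = P i.
Proof. intros H. unfold splice. apply Nat.ltb_lt in H. rewrite H. reflexivity. Qed.

Lemma splice_ge (P : nat -> edge Q G) (len : nat) (p : nat -> edge Q G) (a t : nat) :
  splice P len p a (len + t)%nat = p (a + t)%nat.
Proof. unfold splice. destruct (Nat.ltb_spec (len + t) len); [lia|]. f_equal. lia. Qed.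

Lemma splice_weight (P : nat -> edge Q G) (len : nat) (p : nat -> edge Q G) (a t : nat) :
  prefix_weight w (splice P len p a) (len + t) =
  (prefix_weight w P len + (prefix_weight w p (a + t) - prefix_weight w p a))%Z.
Proof.
  induction t.
  - rewrite !Nat.add_0_r, (prefix_weight_ext _ P) by (intros; apply splice_lt; auto). lia.
  - rewrite <- !plus_n_Sm. simpl. rewrite IHt, splice_ge. lia.
Qed.

Lemma apply_com_app (c : com G) (s l : list G) :
  s <> [] -> apply_com c (s ++ l) = apply_com c s ++ l.
Proof. intros H. destruct c; simpl; auto. destruct s; [congruence|reflexivity]. Qed.

Lemma Top_app (s l : list G) : s <> [] -> Top bot (s ++ l) = Top bot s.
Proof. intros H. destruct s; [congruence|reflexivity]. Qed.

(* After a floor, p only acts on the part s of the stack above the floor; in the spliced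
   path the same part s sits on top of the stack of P instead. *)
Lemma splice_run (P : nat -> edge Q G) (len : nat) (p : nat -> edge Q G) (a : nat)
  (z : G) (alpha beta : list G) :
  fst (run P len) = z :: beta -> fst (run p a) = z :: alpha ->
  snd (run P len) = snd (run p a) -> floor_point p a ->
  forall t, exists s, s <> [] /\ fst (run p (a + t)) = s ++ alpha /\
    run (splice P len p a) (len + t) = (s ++ beta, snd (run p (a + t))).
Proof.
  intros HP Hp Hs Hfl t. induction t as [|t [s [Hne [H1 H2]]]].
  - exists [z]. rewrite !Nat.add_0_r. split; [congruence|]. split; [exact Hp|].
    rewrite (run_ext _ P) by (intros; apply splice_lt; auto).
    destruct (run P len) as [st q]. simpl in *. rewrite <- Hs, HP. reflexivity.
  - exists (apply_com (e_com (p (a + t)%nat)) s).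
    rewrite <- !plus_n_Sm. cbn [run]. rewrite H2, H1, splice_ge. cbn [fst snd].
    rewrite !apply_com_app by exact Hne.
    split; [|split; reflexivity].
    specialize (Hfl (S (a + t)) ltac:(lia)). cbn [run fst] in Hfl.
    rewrite H1, Hp, apply_com_app in Hfl by exact Hne.
    intros He. rewrite He in Hfl. simpl in Hfl. lia.
Qed.

Lemma splice_glue (P : nat -> edge Q G) (len : nat) (p : nat -> edge Q G) (a : nat) :
  wps_wf bot Ed -> valid P -> valid p -> floor_point p a -> head P len = head p a ->
  valid (splice P len p a) /\
  forall t, head (splice P len p a) (len + t) = head p (a + t).
Proof.
  intros Hwf HvP Hvp Hfl Hhd.
  destruct (fst (run P len)) as [|z beta] eqn:HP;
    [exfalso; exact (run_stack_nonempty P Hwf HvP len HP)|].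
  destruct (fst (run p a)) as [|z' alpha] eqn:Hp;
    [exfalso; exact (run_stack_nonempty p Hwf Hvp a Hp)|].
  unfold head in Hhd. rewrite HP, Hp in Hhd. injection Hhd as Hs Hz. subst z'.
  pose proof (splice_run P len p a z alpha beta HP Hp Hs Hfl) as Hrun.
  assert (Hhead : forall t, head (splice P len p a) (len + t) = head p (a + t)).
  { intros t. destruct (Hrun t) as [s [Hne [H1 H2]]]. unfold head.
    rewrite H2, H1. cbn [fst snd]. rewrite !Top_app by exact Hne. reflexivity. }
  split; [|exact Hhead].
  intros i. destruct (Nat.ltb_spec i len) as [Hi|Hi].
  - rewrite splice_lt, (run_ext _ P) by (intros; try apply splice_lt; lia). apply HvP.
  - replace i with (len + (i - len))%nat by lia.
    specialize (Hhead (i - len)%nat). unfold head in Hhead. injection Hhead as Hq Htop.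
    rewrite splice_ge, Hq, Htop. apply Hvp.
Qed.

Definition W (p : nat -> edge Q G) (k : nat) : R := IZR (prefix_weight w p k).

Lemma W_splice (P : nat -> edge Q G) (len : nat) (p : nat -> edge Q G) (a t : nat) :
  W (splice P len p a) (len + t) = W P len + (W p (a + t) - W p a).
Proof. unfold W. rewrite splice_weight, plus_IZR, minus_IZR. reflexivity. Qed.

Definition max_weight : Z := fold_right (fun e acc => Z.max (Z.abs (w e)) acc) 0%Z Ed.

Lemma max_weight_spec :
  (0 <= max_weight)%Z /\ forall e, In e Ed -> (Z.abs (w e) <= max_weight)%Z.
Proof.
  unfold max_weight. induction Ed as [|e0 Ed' IH]; simpl; [split; [lia|tauto]|].
  destruct IH as [H0 H1]. split; [lia|]. intros e [<-|He]; [lia|]. specialize (H1 e He). lia.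
Qed.

Lemma W_bound (p : nat -> edge Q G) (k : nat) :
  valid p -> Rabs (W p k) <= IZR max_weight * INR k.
Proof.
  intros Hv. unfold W. rewrite <- abs_IZR, INR_IZR_INZ, <- mult_IZR. apply IZR_le.
  destruct max_weight_spec as [H0 H1]. induction k; simpl; [lia|].
  destruct (Hv k) as [Hin _]. specialize (H1 _ Hin). lia.
Qed.

Lemma weight_lower_bound (p : nat -> edge Q G) (l eps : R) :
  valid p -> is_LimInfAvg w p l -> l > - eps ->
  exists C, forall k, W p k >= - (eps * INR k) - C.
Proof.
  intros Hv Hl Heps. destruct (liminf_tail _ _ _ Hl Heps) as [n0 Hn0].
  set (B := IZR max_weight).
  assert (HB : 0 <= B) by (apply IZR_le, max_weight_spec).
  exists (B * INR n0 + Rabs eps * INR n0). intros k.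
  assert (H0 : 0 <= B * INR n0) by (apply Rmult_le_pos; [exact HB|apply pos_INR]).
  assert (H1 : 0 <= Rabs eps * INR n0) by (apply Rmult_le_pos; [apply Rabs_pos|apply pos_INR]).
  destruct (Nat.lt_ge_cases k n0) as [Hk|Hk].
  - pose proof (Rabs_bounds _ _ (W_bound p k Hv)) as Hk_bound. fold B in Hk_bound.
    assert (B * INR k <= B * INR n0) by (apply Rmult_le_compat_l; [exact HB|apply le_INR; lia]).
    assert (- (Rabs eps * INR n0) <= eps * INR k).
    { pose proof (Rle_abs (- eps)) as Habs. rewrite Rabs_Ropp in Habs.
      assert (0 <= (eps + Rabs eps) * INR k) by (apply Rmult_le_pos; [lra|apply pos_INR]).
      assert (Rabs eps * INR k <= Rabs eps * INR n0)
        by (apply Rmult_le_compat_l; [apply Rabs_pos|apply le_INR; lia]).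
      lra. }
    lra.
  - specialize (Hn0 _ Hk). unfold avg in Hn0. fold (W p k) in Hn0.
    destruct k as [|k]; [simpl; unfold W; simpl; lra|].
    assert (HkS : 0 < INR (S k)) by (apply lt_0_INR; lia).
    assert (W p (S k) > - eps * INR (S k)).
    { apply (Rmult_lt_compat_r (INR (S k))) in Hn0; [|exact HkS].
      unfold Rdiv in Hn0. rewrite Rmult_assoc, Rinv_l in Hn0 by lra. lra. }
    lra.
Qed.

Lemma LimInfAvg_nonneg (p : nat -> edge Q G) :
  valid p ->
  (forall eps, eps > 0 -> exists K, forall k, (K <= k)%nat -> W p k >= - (eps * INR k)) ->
  exists l, is_LimInfAvg w p l /\ l >= 0.
Proof.
  intros Hv Hev. apply (liminf_nonneg _ (IZR max_weight)).
  - intros k. unfold avg. fold (W p k). destruct k as [|k].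
    + simpl. unfold Rdiv. rewrite Rmult_0_l, Rabs_R0. apply IZR_le, max_weight_spec.
    + assert (Hk : 0 < INR (S k)) by (apply lt_0_INR; lia).
      unfold Rdiv. rewrite Rabs_mult, (Rabs_pos_eq (/ _)) by (left; apply Rinv_0_lt_compat, Hk).
      apply (Rmult_le_reg_r (INR (S k))); [exact Hk|].
      rewrite Rmult_assoc, Rinv_l by lra. rewrite Rmult_1_r. apply W_bound, Hv.
  - intros eps Heps. destruct (Hev eps Heps) as [K HK]. exists (Nat.max K 1). intros k Hk.
    specialize (HK k ltac:(lia)). unfold avg. fold (W p k).
    assert (HkS : 0 < INR k) by (apply lt_0_INR; lia).
    unfold Rdiv. apply Rle_ge. apply (Rmult_le_reg_r (INR k)); [exact HkS|].
    rewrite Rmult_assoc, Rinv_l by lra. lra.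
Qed.

Definition recurrent_head (p : nat -> edge Q G) (hd : Q * G) : Prop :=
  forall M, exists b, (M <= b)%nat /\ floor_point p b /\ head p b = hd.

(* Since there are finitely many heads, some head recurs at the floors of any path. *)
Lemma some_recurrent_head (lQ : list Q) (lG : list G) (p : nat -> edge Q G) :
  Full lQ -> Full lG -> exists hd, In hd (list_prod lQ lG) /\ recurrent_head p hd.
Proof.
  intros HlQ HlG.
  apply (pigeonhole (list_prod lQ lG) (fun b hd => floor_point p b /\ head p b = hd)).
  intros M. destruct (floors_unbounded p M) as [b [Hb Hfl]].
  exists b. split; [exact Hb|]. exists (head p b). split; [apply in_prod; auto|auto].
Qed.

Definition approximant (hd : Q * G) (r : R) (p : nat -> edge Q G) : Prop :=
  valid p /\ recurrent_head p hd /\ exists C, forall k, W p k >= - (r * INR k) - C.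

Lemma common_head :
  Finite Q -> Finite G ->
  (forall eps : R, eps > 0 ->
     exists p, is_path bot q0 Ed p /\ exists l, is_LimInfAvg w p l /\ l > - eps) ->
  exists hd, forall j, exists p, approximant hd (rate j) p.
Proof.
  intros [lQ HlQ] [lG HlG] H.
  destruct (pigeonhole (list_prod lQ lG) (fun m hd => exists p, approximant hd (rate m) p))
    as [hd [_ Hhd]].
  { intros M. exists M. split; [lia|].
    destruct (H (rate M) (rate_pos M)) as [p [Hp [l [Hl Hlr]]]].
    apply is_path_valid in Hp.
    destruct (some_recurrent_head lQ lG p HlQ HlG) as [hd [Hin Hrec]].
    destruct (weight_lower_bound p l (rate M) Hp Hl Hlr) as [C HC].
    exists hd. split; [exact Hin|]. exists p. split; [exact Hp|]. split; [exact Hrec|].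
    exists C. exact HC. }
  exists hd. intros j. destruct (Hhd j) as [m [Hjm [p (Hv & Hrec & C & HC)]]].
  exists p. split; [exact Hv|]. split; [exact Hrec|]. exists C. intros k. specialize (HC k).
  assert (rate m * INR k <= rate j * INR k)
    by (apply Rmult_le_compat_r; [apply pos_INR|apply rate_antitone, Hjm]).
  lra.
Qed.

Definition source (hd : Q * G) (j : nat) (p : nat -> edge Q G) (a : nat) (C : R) : Prop :=
  valid p /\ floor_point p a /\ head p a = hd /\ recurrent_head p hd /\
  forall t, W p (a + t) - W p a >= - (rate j * INR t) - C.

Lemma source_of_approximant (hd : Q * G) (j : nat) (p : nat -> edge Q G) :
  approximant hd (rate j) p -> exists a C, source hd j p a C.
Proof.
  intros (Hv & Hrec & C & HC). destruct (Hrec 0%nat) as [a (_ & Hfl & Hhd)].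
  exists a, (rate j * INR a + C + W p a).
  split; [exact Hv|]. split; [exact Hfl|]. split; [exact Hhd|]. split; [exact Hrec|].
  intros t. specialize (HC (a + t)%nat). rewrite plus_INR in HC. lra.
Qed.

Section Gluing.

Hypothesis Hwf : wps_wf bot Ed.
Variable hd : Q * G.
Variables (sp : nat -> nat -> edge Q G) (sa : nat -> nat) (sC : nat -> R).
Hypothesis Hsrc : forall j, source hd j (sp j) (sa j) (sC j).

(* The slope constant of the prefix invariant; it dominates the edge weights and is >= 2. *)
Let slope : R := IZR max_weight + 2.

Lemma slope_ge_2 : 2 <= slope.
Proof. unfold slope. pose proof (IZR_le _ _ (proj1 max_weight_spec)). lra. Qed.

(* A prefix of level j: the first len edges of a valid path, ending at head hd, with weight
   at least -slope rate(j) len, and long enough to absorb the constant of source j+1. *)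
Definition prefix_ok (j : nat) (x : (nat -> edge Q G) * nat) : Prop :=
  valid (fst x) /\ head (fst x) (snd x) = hd /\
  W (fst x) (snd x) >= - (slope * rate j * INR (snd x)) /\
  sC (S j) <= rate j * INR (snd x).

Definition extends (j : nat) (x y : (nat -> edge Q G) * nat) : Prop :=
  (snd x < snd y)%nat /\ (forall i, (i < snd x)%nat -> fst y i = fst x i) /\
  forall k, (snd x <= k <= snd y)%nat -> W (fst y) k >= - ((slope + 1) * rate j * INR k).

Lemma initial_prefix : exists x, prefix_ok 0 x.
Proof.
  destruct (Hsrc 0%nat) as (Hv & _ & _ & Hrec & _).
  destruct (INR_unbounded (Rabs (sC 1%nat))) as [N HN].
  destruct (Hrec N) as [b (Hb & _ & Hhb)].
  assert (Hrate0 : rate 0 = 1) by (unfold rate; simpl; rewrite Rplus_0_l; apply Rinv_1).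
  exists (sp 0%nat, b). unfold prefix_ok. cbn [fst snd]. rewrite Hrate0.
  split; [exact Hv|]. split; [exact Hhb|]. split.
  - pose proof (Rabs_bounds _ _ (W_bound (sp 0%nat) b Hv)).
    assert (IZR max_weight * INR b <= slope * INR b)
      by (apply Rmult_le_compat_r; [apply pos_INR|unfold slope; lra]).
    lra.
  - pose proof (Rle_abs (sC 1%nat)). apply le_INR in Hb. lra.
Qed.

(* The gluing step: splice source j+1, from its initial floor to a far floor of head hd,
   after a level-j prefix. *)
Lemma extend_prefix (j : nat) (x : (nat -> edge Q G) * nat) :
  prefix_ok j x -> exists y, prefix_ok (S j) y /\ extends j x y.
Proof.
  destruct x as [P len]. intros (HvP & HhP & HX & HCx). cbn [fst snd] in *.
  destruct (Hsrc (S j)) as (Hvp & Hfl & Hha & Hrec & Hseg).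
  set (p := sp (S j)) in *. set (a := sa (S j)) in *. set (C := sC (S j)) in *.
  set (C' := sC (S (S j))). set (X := W P len) in *.
  pose proof (rate_pos (S j)) as Hk'.
  destruct (INR_unbounded ((Rabs X + Rabs C + Rabs C') / rate (S j))) as [N HN].
  destruct (Hrec (a + S N)%nat) as [b (Hb & _ & Hhb)].
  set (d := (b - a)%nat).
  destruct (splice_glue P len p a Hwf HvP Hvp Hfl ltac:(congruence)) as [Hv Hhead].
  assert (Habsorb : Rabs X + Rabs C + Rabs C' <= rate (S j) * INR d).
  { assert (INR N <= INR d) by (apply le_INR; unfold d; lia).
    apply (Rmult_lt_compat_l (rate (S j))) in HN; [|exact Hk'].
    unfold Rdiv in HN. rewrite <- Rmult_assoc, (Rmult_comm (rate (S j))), Rmult_assoc,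
      Rinv_r, Rmult_1_r in HN by lra.
    assert (rate (S j) * INR N <= rate (S j) * INR d) by (apply Rmult_le_compat_l; lra).
    lra. }
  pose proof (rate_antitone j (S j) (Nat.le_succ_diag_r j)) as Hkk.
  pose proof (pos_INR len) as He.
  exists (splice P len p a, (len + d)%nat). unfold prefix_ok, extends. cbn [fst snd].
  split; [split; [exact Hv|split]|split; [|split]].
  - rewrite Hhead. replace (a + d)%nat with b by (unfold d; lia). exact Hhb.
  - rewrite W_splice, plus_INR. fold X.
    apply (block_end_bound slope (rate (S j)) (INR len) (INR d) X C C');
      auto using slope_ge_2.
  - unfold d. lia.
  - intros i Hi. apply splice_lt, Hi.
  - intros k Hk. replace k with (len + (k - len))%nat by lia.
    rewrite W_splice. fold X.
    replace (INR (len + (k - len))) with (INR len + INR (k - len)) by (symmetry; apply plus_INR).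
    apply (block_inner_bound slope (rate j) (rate (S j)) (INR len) (INR (k - len)) X C);
      auto using pos_INR.
    pose proof slope_ge_2. lra.
Qed.

Lemma glued_path :
  exists ps, valid ps /\
    forall eps, eps > 0 -> exists K, forall k, (K <= k)%nat -> W ps k >= - (eps * INR k).
Proof.
  destruct initial_prefix as [x0 Hx0].
  destruct (dependent_choice_nat prefix_ok extends x0 Hx0 extend_prefix) as [s Hs].
  set (P := fun n => fst (s n)). set (len := fun n => snd (s n)).
  assert (Hinc : forall n, (len n < len (S n))%nat) by (intros n; apply (Hs n)).
  assert (Hagr : forall n i, (i < len n)%nat -> P (S n) i = P n i) by (intros n; apply (Hs n)).
  pose proof (limit_of_prefixes P len Hinc Hagr) as Hlim.
  pose proof (increasing_ge_id len Hinc) as Hlen.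
  exists (fun i => P (S i) i). split.
  - intros i. rewrite (run_ext _ (P (S i)))
      by (intros k Hk; apply Hlim; specialize (Hlen (S i)); lia).
    apply (proj1 (proj1 (Hs (S i)))).
  - apply (eventual_slope _ len (slope + 1)); [pose proof slope_ge_2; lra|exact Hinc|].
    intros n k Hk. unfold W. rewrite (prefix_weight_ext _ (P (S n))) by (intros; apply Hlim; lia).
    apply (Hs n), Hk.
Qed.

End Gluing.
End System.

Theorem lemma6 (Q G : Type) (HQ : Finite Q) (HG : Finite G) (bot : G) (q0 : Q)
  (E : list (edge Q G)) (w : edge Q G -> Z) (Hwf : wps_wf bot E) :
  (exists p, is_path bot q0 E p /\ exists l, is_LimInfAvg w p l /\ l >= 0)
  <->
  (forall eps : R, eps > 0 ->
     exists p, is_path bot q0 E p /\ exists l, is_LimInfAvg w p l /\ l > - eps).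
Proof.
  split.
  - intros [p [Hp [l [Hl Hl0]]]] eps Heps.
    exists p. split; [exact Hp|]. exists l. split; [exact Hl|lra].
  - intros Happrox.
    destruct (common_head bot q0 E w HQ HG Happrox) as [hd Hhd].
    assert (Hsrc : forall j, {x : (nat -> edge Q G) * nat * R |
                     source bot q0 E w hd j (fst (fst x)) (snd (fst x)) (snd x)}).
    { intros j. apply constructive_indefinite_description.
      destruct (Hhd j) as [p Hp].
      destruct (source_of_approximant bot q0 E w hd j p Hp) as [a [C Hs]].
      exists (p, a, C). exact Hs. }
    destruct (glued_path bot q0 E w Hwf hd
                (fun j => fst (fst (proj1_sig (Hsrc j))))
                (fun j => snd (fst (proj1_sig (Hsrc j))))
                (fun j => snd (proj1_sig (Hsrc j)))
                (fun j => proj2_sig (Hsrc j))) as [ps [Hv Hev]].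
    destruct (LimInfAvg_nonneg bot q0 E w ps Hv Hev) as [l [Hl Hl0]].
    exists ps. split; [apply is_path_valid, Hv|]. exists l. split; assumption.
Qed.
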